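(* For all $N\ge2$ and $n\ge0$, as Laurent polynomials, $$h_n\Big(\frac1{x_1},\ldots,\frac1{x_N}\Big)\,h_n(x_1,\ldots,x_N)=\frac{(N)_n}{n!}\,\sigma_n^{N-1}(x).$$
   Context: $(t)_m=\prod_{i=1}^m(t+i-1)$ is the Pochhammer symbol. $h_n(x)=\sum\{x^\alpha:\alpha\in\mathbb{N}_0^N,\ \sum_i\alpha_i=n\}$ is the complete symmetric polynomial. $\boldsymbol{Z}_{N,k}=\{\alpha\in\mathbb{Z}^N:\sum_i\alpha_i=0,\ \sum_i|\alpha_i|=2k\}$, $S_k(x)=\sum_{\alpha\in\boldsymbol{Z}_{N,k}}x^\alpha$, and for $\delta>0$ the Cesàro kernel is $\sigma_n^\delta(x)=\sum_{k=0}^n\frac{(-n)_k}{(-n-\delta)_k}S_k(x)$. *)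

(* Laurent polynomials in N variables over rat, encoded as
   finite formal sums (lists of coefficient/exponent pairs); two Laurent
   polynomials are equal iff all their coefficients agree. *)
From HB Require Import structures.
From mathcomp Require Import all_boot all_order all_algebra.
Set Implicit Arguments. Unset Strict Implicit. Unset Printing Implicit Defensive.
Import Order.TTheory GRing.Theory Num.Theory.
Local Open Scope ring_scope.

Definition expo (N : nat) := {ffun 'I_N -> int}.

Definition laurent (N : nat) := seq (rat * expo N).

Definition lcoef N (p : laurent N) (a : expo N) : rat :=
  \sum_(t <- p | t.2 == a) t.1.

Definition leq_laurent N (p q : laurent N) : Prop :=
  forall a : expo N, lcoef p a = lcoef q a.

Definition lmul N (p q : laurent N) : laurent N :=
  [seq (t.1 * u.1, [ffun i => t.2 i + u.2 i] : expo N) | t : rat * expo N <- p, u : rat * expo N <- q].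

Definition lscale N (c : rat) (p : laurent N) : laurent N :=
  [seq (c * t.1, t.2) | t : rat * expo N <- p].

Definition linv N (p : laurent N) : laurent N :=
  [seq (t.1, [ffun i => - t.2 i] : expo N) | t : rat * expo N <- p].

Definition poch (t : rat) (m : nat) : rat := \prod_(i < m) (t + i%:R).

(* complete symmetric polynomial h_n(x) = sum_{alpha in N_0^N, |alpha| = n} x^alpha
   (each alpha_i <= n, so enumerate over {ffun 'I_N -> 'I_n.+1}) *)
Definition hpoly (N n : nat) : laurent N :=
  [seq ((1 : rat), [ffun i => ((f i : nat)%:Z)] : expo N) |
     f : {ffun 'I_N -> 'I_n.+1} <- enum {ffun 'I_N -> 'I_n.+1} & (\sum_(i < N) (f i : nat))%N == n].

Definition inZNk N (k : nat) (a : expo N) : bool :=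
  (\sum_(i < N) a i == 0) && ((\sum_(i < N) `|a i|)%N == (2 * k)%N).

(* S_k(x) = sum_{alpha in Z_{N,k}} x^alpha.  Every alpha in Z_{N,k} has
   |alpha_i| <= 2k, so we enumerate alpha_i = j - 2k with j in 'I_(4k).+1
   (an injective parametrisation). *)
Definition shift N (k : nat) (f : {ffun 'I_N -> 'I_(4 * k).+1}) : expo N :=
  [ffun i => (f i : nat)%:Z - (2 * k)%:Z].

Definition Spoly (N k : nat) : laurent N :=
  [seq ((1 : rat), shift f) | f : {ffun 'I_N -> 'I_(4 * k).+1} <- enum {ffun 'I_N -> 'I_(4 * k).+1} & inZNk k (shift f)].

Definition cesaro (N n : nat) (delta : rat) : laurent N :=
  flatten [seq lscale (poch (- n%:R) k / poch (- n%:R - delta) k) (Spoly N k)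
          | k <- iota 0 n.+1].

From mathcomp Require Import all_boot all_order all_algebra.
From mathcomp Require Import zify ring.
Set Implicit Arguments. Unset Strict Implicit. Unset Printing Implicit Defensive.
Import Order.TTheory GRing.Theory Num.Theory.
Local Open Scope ring_scope.

(* The coefficient of x^a on the left counts the pairs (f, g) of compositions
   of n into N parts with g - f = a.  Such pairs exist only when sum a = 0, and
   then g = f + a is determined by f, which must dominate the negative part a^-
   of a; subtracting a^- from f leaves the compositions of n - |a^-| into N
   parts, so the coefficient is C(N - 1 + n - |a^-|, N - 1).  On the right,
   x^a lies in Z_{N,k} exactly for k = |a^-|, and the Pochhammer factor
   (N)_n/n! * (-n)_k/(-n-N+1)_k is the same binomial coefficient. *)

Lemma lcoef_lscale N c (p : laurent N) a : lcoef (lscale c p) a = c * lcoef p a.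
Proof. by rewrite /lcoef /lscale big_map /= mulr_sumr. Qed.

Lemma lcoef_flatten N (ps : seq (laurent N)) a :
  lcoef (flatten ps) a = \sum_(p <- ps) lcoef p a.
Proof. by rewrite /lcoef big_flatten. Qed.

Lemma lcoef_lmul N (p q : laurent N) a :
  lcoef (lmul p q) a =
  \sum_(t <- p) \sum_(u <- q | [ffun i => t.2 i + u.2 i] == a) t.1 * u.1.
Proof.
rewrite /lcoef /lmul big_mkcond big_allpairs_dep /=.
by apply: eq_bigr => t _; rewrite [RHS]big_mkcond.
Qed.

Lemma leq_sum_ord N (F : 'I_N -> nat) i : (F i <= \sum_(j < N) F j)%N.
Proof. by rewrite (bigD1 i) //= leq_addr. Qed.

Definition negpart (x : int) : nat := if x < 0 then `|x|%N else 0%N.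

Definition negweight N (a : expo N) : nat := (\sum_(i < N) negpart (a i))%N.

Lemma natz_sum N (F : 'I_N -> nat) :
  ((\sum_(i < N) F i)%N)%:Z = \sum_(i < N) (F i)%:Z.
Proof. exact: (big_morph Posz PoszD (erefl _)). Qed.

Lemma sum_abs_sum0 N (a : expo N) : \sum_(i < N) a i = 0 ->
  (\sum_(i < N) `|a i|)%N = (2 * negweight a)%N.
Proof.
move=> a0; apply/eqP; rewrite -eqz_nat natz_sum PoszM natz_sum.
rewrite (eq_bigr (fun i => a i + 2%:Z * (negpart (a i))%:Z)); last first.
  by move=> i _; rewrite /negpart; case: ifP; lia.
by rewrite big_split /= a0 add0r -mulr_sumr.
Qed.

Lemma inZNk_sum0 N k (a : expo N) : \sum_(i < N) a i = 0 ->
  inZNk k a = (k == negweight a).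
Proof.
by move=> a0; rewrite /inZNk a0 eqxx sum_abs_sum0 // eqn_pmul2l // eq_sym.
Qed.

(* [shift] is injective and reaches every exponent with |a_i| <= 2k, so
   [Spoly] lists each element of Z_{N,k} exactly once. *)
Lemma lcoef_Spoly N k (a : expo N) : lcoef (Spoly N k) a = (inZNk k a)%:R.
Proof.
rewrite /lcoef /Spoly big_map big_filter_cond big_enum_cond /=.
have [aZ|aZ] := boolP (inZNk k a); last first.
  rewrite big_pred0 // => f /=.
  by case: eqP => [->|]; rewrite ?(negbTE aZ) ?andbF.
have a_bound i : (`|a i| <= 2 * k)%N.
  by move: aZ => /andP[_ /eqP <-]; exact: leq_sum_ord (fun j => `|a j|%N) i.
pose f0 : {ffun 'I_N -> 'I_(4 * k).+1} := [ffun i => inord `|a i + (2 * k)%N%:Z|].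
have shift_f0 : shift f0 = a.
  apply/ffunP => i; rewrite /shift !ffunE inordK;
  by have := a_bound i; move: (a i) => x; lia.
rewrite (eq_bigl (pred1 f0)) ?big_pred1_eq // => f /=; apply/andP/eqP.
  move=> [_ /eqP fa]; apply/ffunP => i; apply: val_inj.
  by rewrite /f0 -fa /shift !ffunE subrK /= inordK.
by move=> ->; rewrite shift_f0.
Qed.

Definition cesaro_weight (n : nat) (delta : rat) (k : nat) : rat :=
  poch (- n%:R) k / poch (- n%:R - delta) k.

Lemma lcoef_cesaro N n delta (a : expo N) :
  lcoef (cesaro N n delta) a =
  if (\sum_(i < N) a i == 0) && (negweight a <= n)%N
  then cesaro_weight n delta (negweight a) else 0.
Proof.
rewrite /cesaro lcoef_flatten big_map.
under eq_bigr do rewrite lcoef_lscale lcoef_Spoly -/(cesaro_weight _ _ _).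
have [a0|a0] := eqVneq (\sum_(i < N) a i) 0; last first.
  by rewrite big1_seq // => k _; rewrite /inZNk (negbTE a0) mulr0.
under eq_bigr do rewrite inZNk_sum0 //.
rewrite -[iota 0 n.+1]/(index_iota 0 n.+1).
rewrite (eq_bigr (fun k =>
  if k == negweight a then cesaro_weight n delta k else 0));
  last by move=> k _; case: eqP; rewrite ?mulr1 ?mulr0.
by rewrite -big_mkcond big_nat1_eq /= ltnS.
Qed.

Definition composition N n (f : {ffun 'I_N -> 'I_n.+1}) : bool :=
  (\sum_(i < N) (f i : nat))%N == n.

Lemma card_compositions_above M n (b : 'I_M.+1 -> nat) :
  #|[set f : {ffun 'I_M.+1 -> 'I_n.+1}
        | composition f && [forall i, b i <= f i]%N]|
  = if (\sum_(i < M.+1) b i <= n)%N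
    then 'C(M + (n - \sum_(i < M.+1) b i), M) else 0%N.
Proof.
set k := (\sum_(i < M.+1) b i)%N.
have [kn|nk] := leqP; last first.
  apply/eqP; rewrite cards_eq0; apply/eqP/setP => f; rewrite !inE.
  apply/negbTE/andP => -[/eqP fn /forallP bf].
  by move: nk; rewrite -fn ltnNge (leq_sum _ (fun i _ => bf i)).
rewrite -card_ord_partitions -!sum1dep_card.
pose raise (t : M.+1.-tuple 'I_(n - k).+1) : {ffun 'I_M.+1 -> 'I_n.+1} :=
  [ffun i => inord (tnth t i + b i)].
pose lower (f : {ffun 'I_M.+1 -> 'I_n.+1}) : M.+1.-tuple 'I_(n - k).+1 :=
  [tuple inord (f i - b i) | i < M.+1].
have raiseE t i : (raise t i : nat) = (tnth t i + b i)%N.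
  rewrite ffunE inordK //; have := ltn_ord (tnth t i).
  have := leq_sum_ord b i; rewrite -/k; lia.
rewrite (reindex raise) /=.
  apply: eq_bigl => t; rewrite /composition.
  have -> : (\sum_(i < M.+1) raise t i = \sum_(x <- t) x + k)%N.
    by rewrite big_tuple -big_split; apply: eq_bigr => i _; rewrite raiseE.
  have -> : [forall i, b i <= raise t i]%N.
    by apply/forallP => i; rewrite raiseE leq_addl.
  by rewrite andbT -[RHS](eqn_add2r k) subnK.
exists lower => [t _ | f].
  by apply: eq_from_tnth => i; rewrite tnth_mktuple raiseE addnK inord_val.
rewrite inE => /andP[/eqP fn /forallP bf].
have fb_le i : (f i - b i <= n - k)%N.
  have -> : (n - k = \sum_(j < M.+1) (f j - b j))%N.
    by rewrite sumnB ?fn // => j _; exact: bf.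
  exact: leq_sum_ord (fun j => f j - b j)%N i.
apply/ffunP => i; apply: ord_inj.
by rewrite raiseE tnth_mktuple inordK ?ltnS ?subnK.
Qed.

Definition cdiff N n (f g : {ffun 'I_N -> 'I_n.+1}) : expo N :=
  [ffun i => (g i : nat)%:Z - (f i : nat)%:Z].

Lemma lcoef_hinv_h N n a :
  lcoef (lmul (linv (hpoly N n)) (hpoly N n)) a =
  \sum_(f : {ffun 'I_N -> 'I_n.+1} | composition f)
    \sum_(g | composition g) (cdiff f g == a)%:R.
Proof.
rewrite lcoef_lmul /linv /hpoly big_map big_map big_filter big_enum_cond /=.
apply: eq_bigr => f _.
rewrite big_map big_filter_cond big_enum_cond big_mkcond [RHS]big_mkcond /=.
apply: eq_bigr => g _; rewrite /composition; case: (_ == n)%N => //.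
have -> : [ffun i => [ffun i0 => - ([ffun i1 => (f i1 : nat)%:Z] : expo N) i0] i
                     + [ffun i0 => (g i0 : nat)%:Z] i] = cdiff f g.
  by apply/ffunP => i; rewrite !ffunE addrC.
by rewrite mulr1 /=; case: (_ == a).
Qed.

Lemma sum_cdiff N n (f g : {ffun 'I_N -> 'I_n.+1}) :
  composition f -> composition g -> \sum_(i < N) cdiff f g i = 0.
Proof.
move=> /eqP fn /eqP gn; under eq_bigr do rewrite ffunE.
by rewrite sumrB -!natz_sum fn gn subrr.
Qed.

Lemma count_cdiff N n (f : {ffun 'I_N -> 'I_n.+1}) (a : expo N) :
  composition f -> \sum_(i < N) a i = 0 ->
  \sum_(g | composition g) (cdiff f g == a)%:R
  = [forall i, negpart (a i) <= f i]%N%:R :> rat.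
Proof.
move=> /eqP fn a0.
have [/forallP fa|/forallPn[i fai]] := boolP [forall i, negpart (a i) <= f i]%N;
  last first.
  rewrite big1 // => g _.
  case: eqP => //= /ffunP/(_ i); rewrite ffunE => gi; move: fai.
  by rewrite /negpart -gi; case: ifP; lia.
have fa_ge0 i : 0 <= (f i : nat)%:Z + a i.
  by have := fa i; rewrite /negpart; case: ifP; lia.
have fa_sum : (\sum_(i < N) `|((f i : nat)%:Z + a i)%R|)%N = n.
  apply/eqP; rewrite -eqz_nat natz_sum.
  under eq_bigr => i _ do rewrite gez0_abs ?fa_ge0 //.
  by rewrite big_split /= a0 addr0 -natz_sum fn.
have fa_lt i : (`|((f i : nat)%:Z + a i)%R| < n.+1)%N.
  rewrite ltnS -[X in (_ <= X)%N]fa_sum.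
  exact: leq_sum_ord (fun j => `|((f j : nat)%:Z + a j)%R|)%N i.
pose g0 : {ffun 'I_N -> 'I_n.+1} := [ffun i => inord `|((f i : nat)%:Z + a i)%R|].
rewrite (eq_bigr (fun g => if cdiff f g == a then 1 else 0)) -?big_mkcondr;
  last by move=> g _; case: eqP.
rewrite (eq_bigl (pred1 g0)) ?big_pred1_eq // => g /=; apply/andP/eqP.
  move=> [_ /eqP/ffunP ga]; apply/ffunP => i; apply: ord_inj.
  by rewrite ffunE inordK // -(ga i) ffunE addrC subrK.
move=> ->; split.
  rewrite /composition -[X in _ == X]fa_sum.
  by apply/eqP/eq_bigr => i _; rewrite ffunE inordK.
apply/eqP/ffunP => i; rewrite !ffunE inordK // gez0_abs ?fa_ge0 //.
by rewrite addrC addKr.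
Qed.

Lemma lcoef_hinv_h_closed M n (a : expo M.+1) :
  lcoef (lmul (linv (hpoly M.+1 n)) (hpoly M.+1 n)) a =
  if (\sum_(i < M.+1) a i == 0) && (negweight a <= n)%N
  then 'C(M + (n - negweight a), M)%:R else 0.
Proof.
rewrite lcoef_hinv_h; have [a0|a0] := eqVneq; last first.
  rewrite big1 // => f fc; rewrite big1 // => g gc.
  by case: eqP => // fga; move: a0; rewrite -fga sum_cdiff ?eqxx.
under eq_bigr => f fc do rewrite count_cdiff //.
rewrite -natr_sum -big_mkcondr /= sum1dep_card card_compositions_above.
by case: ifP.
Qed.

Lemma poch_nat_fact M n : poch M.+1%:R n * M`!%:R = (M + n)`!%:R.
Proof.
elim: n => [|n IH]; first by rewrite /poch big_ord0 mul1r addn0.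
rewrite /poch big_ord_recr /= -/(poch _ n) mulrAC IH addnS factS natrM.
by rewrite -natrD addSn mulrC.
Qed.

Lemma poch_opp_nat m k : (k <= m)%N -> poch (- m%:R) k = (-1) ^+ k * (m ^_ k)%:R.
Proof.
elim: k => [|k IH] km; first by rewrite /poch big_ord0 expr0 mul1r ffactn0.
rewrite /poch big_ord_recr /= -/(poch _ k) IH ?(ltnW km) // ffactnSr natrM.
by rewrite natrB ?(ltnW km) // exprS; ring.
Qed.

Lemma natr_quot (m p q : nat) :
  (0 < q)%N -> (m * q)%N = p -> m%:R = p%:R / q%:R :> rat.
Proof. by move=> q_gt0 <-; rewrite natrM mulfK // pnatr_eq0 -lt0n. Qed.

Lemma cesaro_weight_binomial M n k : (k <= n)%N ->
  poch M.+1%:R n / n`!%:R * cesaro_weight n M%:R k = 'C(M + (n - k), M)%:R.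
Proof.
move=> kn; have knM : (k <= n + M)%N by rewrite (leq_trans kn) ?leq_addr.
rewrite /cesaro_weight -opprD -natrD !poch_opp_nat //.
have -> : poch M.+1%:R n = (M + n)`!%:R / M`!%:R.
  by rewrite -poch_nat_fact mulfK // pnatr_eq0 -lt0n fact_gt0.
rewrite (natr_quot (fact_gt0 _) (ffact_fact kn)).
rewrite (natr_quot (fact_gt0 _) (ffact_fact knM)) [(n + M)%N]addnC -addnBA //.
rewrite (natr_quot _ (bin_fact (leq_addr _ M))) ?muln_gt0 ?fact_gt0 //.
rewrite addKn natrM; field.
by rewrite signr_eq0 !pnatr_eq0 -!lt0n !fact_gt0.
Qed.

Theorem theorem4p5 (N n : nat) (hN : (2 <= N)%N) :
  leq_laurent (lmul (linv (hpoly N n)) (hpoly N n))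
              (lscale (poch N%:R n / (n`!)%:R) (cesaro N n (N.-1)%:R)).
Proof.
case: N hN => [|M] // _ a.
rewrite lcoef_lscale lcoef_hinv_h_closed lcoef_cesaro.
case: ifP => [/andP[_ kn]|_]; last by rewrite mulr0.
by rewrite cesaro_weight_binomial.
Qed.
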